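(* Let $1\le r\le s\le t$ and let $u=ABCd$, $v=A'B'C'd'$ be vertices of $E3C(r,s,t)$ with $A\ne A'$, $B\ne B'$, $C=C'$ and $d=d'$. Then there exist $2r+2$ pairwise internally disjoint $u$–$v$ paths in $E3C(r,s,t)$, each of length at most $r+s+5$ if $d=0$, and each of length at most $r+s+7$ if $d\in\{1,2\}$.
   Context: The exchanged 3-ary $n$-cube $E3C(r,s,t)$ ($r,s,t\ge1$, $n=r+s+t+1$): vertices are strings written $x=ABCd$ with $A\in\{0,1,2\}^r$, $B\in\{0,1,2\}^s$, $C\in\{0,1,2\}^t$, $d\in\{0,1,2\}$. Two distinct vertices $x=ABCd$, $y=A'B'C'd'$ are adjacent iff one of: (E0) $A=A',B=B',C=C'$ and $d\ne d'$; (E1) $d=d'=0$, $A=A'$, $B=B'$ and $C,C'$ differ in exactly one position; (E2) $d=d'=1$, $A=A'$, $C=C'$ and $B,B'$ differ in exactly one position; (E3) $d=d'=2$, $B=B'$, $C=C'$ and $A,A'$ differ in exactly one position. Paths are internally disjoint if they share no vertices other than their endpoints; length = number of edges. *)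

From mathcomp Require Import all_boot.
Set Implicit Arguments. Unset Strict Implicit. Unset Printing Implicit Defensive.

Definition vert (r s t : nat) : finType :=
  (r.-tuple 'I_3 * s.-tuple 'I_3 * t.-tuple 'I_3 * 'I_3)%type.

Definition vA {r s t} (x : vert r s t) : r.-tuple 'I_3 := x.1.1.1.
Definition vB {r s t} (x : vert r s t) : s.-tuple 'I_3 := x.1.1.2.
Definition vC {r s t} (x : vert r s t) : t.-tuple 'I_3 := x.1.2.
Definition vd {r s t} (x : vert r s t) : 'I_3 := x.2.

Definition diff1 {n} (X Y : n.-tuple 'I_3) : bool :=
  #|[pred i : 'I_n | tnth X i != tnth Y i]| == 1.

Definition i0 : 'I_3 := @Ordinal 3 0 isT.
Definition i1 : 'I_3 := @Ordinal 3 1 isT.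
Definition i2 : 'I_3 := @Ordinal 3 2 isT.

Definition e3c_adj {r s t} (x y : vert r s t) : bool :=
  [|| (vA x == vA y) && (vB x == vB y) && (vC x == vC y) && (vd x != vd y),
      (vd x == i0) && (vd y == i0) && (vA x == vA y) && (vB x == vB y)
        && diff1 (vC x) (vC y),
      (vd x == i1) && (vd y == i1) && (vA x == vA y) && (vC x == vC y)
        && diff1 (vB x) (vB y)
    | (vd x == i2) && (vd y == i2) && (vB x == vB y) && (vC x == vC y)
        && diff1 (vA x) (vA y)].

(* A u-v path is represented by the list p of vertices after u: the
   walk is u :: p, it must follow edges, end at v, and be simple.
   Its length (number of edges) is size p. *)
Definition is_uv_path {r s t} (u v : vert r s t) (p : seq (vert r s t)) : bool :=
  [&& path e3c_adj u p, last u p == v & uniq (u :: p)].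

(* interior vertices of the path u :: p (excluding both endpoints u and
   the last vertex of p) *)
Definition interior {T : Type} (p : seq T) : seq T := take (size p).-1 p.

Definition int_disjoint {T : eqType} (ps : seq (seq T)) : Prop :=
  forall i j, i < size ps -> j < size ps -> i != j ->
    forall x, x \in interior (nth [::] ps i) -> x \notin interior (nth [::] ps j).

From mathcomp Require Import all_boot zify.
Set Implicit Arguments. Unset Strict Implicit. Unset Printing Implicit Defensive.

(* Let D and E be the positions where A, A' and where B, B' differ, and a = |D|.
   Layer 2 corrects the A-string one position at a time, layer 1 the B-string,
   layer 0 the C-string, and a vertical edge only changes d.
   For d = 2 take: for each m <= a, the path correcting D_m, ..., D_(a-1) in
   layer 2, then B in layer 1, then D_0, ..., D_(m-1) back in layer 2; for each
   position p and value c other than A_p and A'_p, the path that first sets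
   A_p := c and corrects p last; and one path through layer 0 at a neighbour of C.
   That is (a + 1) + (2r - a) + 1 = 2r + 2 paths.  Interior vertices of the first
   kind are told apart by which positions of D are already corrected, those of
   the second kind by the value c at p, and only the last path leaves C.
   For d = 0, go through layer 1, through layer 2, or through layer 2 at one of
   the 2t >= 2r neighbours of C.  The case d = 1 is the case d = 2 with the roles
   of A and B exchanged. *)

Lemma mem_drop_index (T : eqType) (s : seq T) m x : uniq s -> x \in s ->
  (x \in drop m s) = (m <= index x s).
Proof.
move=> us xs; rewrite leqNgt -in_take //.
have: uniq (take m s ++ drop m s) by rewrite cat_take_drop.
rewrite cat_uniq => /and3P[_ /hasPn dis _].
have: x \in take m s ++ drop m s by rewrite cat_take_drop.
rewrite mem_cat.
case: (boolP (x \in take m s)) => [xt _ | _ /= ->] //.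
by apply/negbTE; apply: contraL xt => /dis.
Qed.

Lemma uniq_cat_key (T U : eqType) (key : T -> U) (s1 s2 : seq T) :
  uniq s1 -> uniq s2 -> {in s1 & s2, forall x y, key x != key y} -> uniq (s1 ++ s2).
Proof.
move=> u1 u2 sep; rewrite cat_uniq u1 u2 andbT; apply/hasPn => y ys2.
by apply/negP => ys1; have := sep y y ys1 ys2; rewrite eqxx.
Qed.

Lemma exists_index (T : eqType) (s : seq T) k : uniq s -> k < size s ->
  exists2 x, x \in s & index x s = k.
Proof.
by case: s => // x0 s' us ks; exists (nth x0 (x0 :: s') k); [exact: mem_nth | exact: index_uniq].
Qed.

Lemma pairwise_map_uniq (T : eqType) (T' : Type) (f : T -> T') (R : rel T') xs :
  uniq xs -> {in xs &, forall x y, x != y -> R (f x) (f y)} -> pairwise R (map f xs).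
Proof.
rewrite pairwise_map uniq_pairwise => uxs Rf.
by apply: (sub_in_pairwise _ (allss xs)) uxs => x y xs_x xs_y /Rf; apply.
Qed.

Lemma int_disjointP (T : finType) (ps : seq (seq T)) :
  int_disjoint ps <-> pairwise (fun p q => [disjoint interior p & interior q]) ps.
Proof.
split=> [H | /(pairwiseP [::]) H i j ip jp ij x xi].
  apply/(pairwiseP [::]) => i j ip jp ij; rewrite disjoint_has; apply/hasPn => x.
  by apply: H; rewrite // neq_ltn ij.
case: (ltngtP i j) ij => // [ij | ji] _; first by rewrite (disjointFr (H i j ip jp ij)).
by rewrite (disjointFr _ xi) // disjoint_sym H.
Qed.

Lemma neq_by (T U : eqType) (f : T -> U) x y : f x != f y -> x != y.
Proof. by apply: contra_neq => ->. Qed.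
Arguments neq_by {T U} f {x y}.

(** * Strings over {0, 1, 2} *)

Section Strings.
Variable n : nat.
Implicit Types (X T : n.-tuple 'I_3) (S L : seq 'I_n).

Definition overwrite X S T : n.-tuple 'I_3 :=
  [tuple if i \in S then tnth T i else tnth X i | i < n].

Lemma tnth_overwrite X S T i :
  tnth (overwrite X S T) i = if i \in S then tnth T i else tnth X i.
Proof. by rewrite tnth_mktuple. Qed.

Lemma overwrite0 X T : overwrite X [::] T = X.
Proof. by apply: eq_from_tnth => i; rewrite tnth_overwrite. Qed.

Lemma overwrite_cat X S S' T :
  overwrite (overwrite X S T) S' T = overwrite X (S ++ S') T.
Proof.
apply: eq_from_tnth => i; rewrite !tnth_overwrite mem_cat.
by case: (i \in S); case: (i \in S').
Qed.

Lemma overwrite_agree X S T i :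
  (tnth (overwrite X S T) i == tnth T i) = (i \in S) || (tnth X i == tnth T i).
Proof. by rewrite tnth_overwrite; case: (i \in S); rewrite ?eqxx. Qed.

Definition diffpos X T : seq 'I_n := [seq i <- enum 'I_n | tnth X i != tnth T i].

Lemma mem_diffpos X T i : (i \in diffpos X T) = (tnth X i != tnth T i).
Proof. by rewrite mem_filter mem_enum andbT. Qed.

Lemma size_diffpos X T : size (diffpos X T) <= n.
Proof. by rewrite -[leqRHS]size_enum_ord size_filter count_size. Qed.

Lemma overwrite_diffpos X S T : {subset diffpos X T <= S} -> overwrite X S T = T.
Proof.
move=> sub; apply: eq_from_tnth => i; rewrite tnth_overwrite.
case: ifP => // iNS; apply/eqP; apply: contraFT iNS => neq.
by rewrite sub ?mem_diffpos.
Qed.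

Lemma diffpos_id X : diffpos X X = [::].
Proof. by rewrite -[RHS](filter_pred0 (enum 'I_n)); apply: eq_filter => i; rewrite eqxx. Qed.

(* [fixable X T L]: correcting the positions of L to their values in T, one
   after the other starting from X, changes exactly one coordinate per step. *)
Definition fixable X T L := uniq L && all (fun i => tnth X i != tnth T i) L.

Lemma fixable_diffpos X T : fixable X T (diffpos X T).
Proof. by rewrite /fixable filter_uniq ?enum_uniq //; apply/allP => i; rewrite mem_diffpos. Qed.

Lemma fixable_perm X T L L' : perm_eq L L' -> fixable X T L = fixable X T L'.
Proof. by move=> pLL'; rewrite /fixable (perm_uniq pLL') (perm_all _ pLL'). Qed.

Lemma fixable_catl X T L L' : fixable X T (L ++ L') -> fixable X T L.
Proof. by rewrite /fixable cat_uniq all_cat => /andP[/and3P[-> _ _] /andP[-> _]]. Qed.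

Lemma fixable_catr X T L L' : fixable X T (L ++ L') -> fixable (overwrite X L T) T L'.
Proof.
rewrite /fixable cat_uniq all_cat => /andP[/and3P[_ /hasPn dis ->] /andP[_ /allP neq]].
apply/allP => i iL'; rewrite tnth_overwrite.
by rewrite (negbTE (dis i iL')) neq // mem_cat iL' orbT.
Qed.

Lemma diff1_sym X T : diff1 X T = diff1 T X.
Proof. by rewrite /diff1; congr (_ == _); apply: eq_card => i; rewrite !inE eq_sym. Qed.

Lemma diff1_neq X T : diff1 X T -> X != T.
Proof.
apply: contraL => /eqP->; rewrite /diff1 (eq_card (B := pred0)) ?card0 // => i.
by rewrite !inE eqxx.
Qed.

Lemma diff1_overwrite1 X T i : tnth X i != tnth T i -> diff1 X (overwrite X [:: i] T).
Proof.
move=> neq; rewrite /diff1 (eq_card (B := pred1 i)) ?card1 // => j.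
by rewrite !inE tnth_overwrite inE; case: (eqVneq j i) => [-> | _]; rewrite ?eqxx.
Qed.

Fixpoint walk_to T X L : seq (n.-tuple 'I_3) :=
  if L is i :: L' then overwrite X [:: i] T :: walk_to T (overwrite X [:: i] T) L'
  else [::].

Lemma size_walk_to T X L : size (walk_to T X L) = size L.
Proof. by elim: L X => //= i L IH X; rewrite IH. Qed.

Lemma last_walk_to T X L : last X (walk_to T X L) = overwrite X L T.
Proof. by elim: L X => [|i L IH] X /=; rewrite ?overwrite0 // IH overwrite_cat. Qed.

Lemma mem_walk_to T X L Y : Y \in walk_to T X L ->
  exists2 l, 0 < l <= size L & Y = overwrite X (take l L) T.
Proof.
elim: L X => //= i L IH X; rewrite inE => /predU1P[-> | /IH[l /andP[_ lL] ->]].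
  by exists 1; rewrite /= ?take0.
by exists l.+1; rewrite ?ltnS // overwrite_cat.
Qed.

Lemma mem_walk_to_cons T X L Y : Y \in X :: walk_to T X L ->
  exists2 l, l <= size L & Y = overwrite X (take l L) T.
Proof.
rewrite inE => /predU1P[-> | /mem_walk_to[l /andP[_ lL] ->]]; last by exists l.
by exists 0; rewrite ?take0 ?overwrite0.
Qed.

Lemma path_walk_to T X L : fixable X T L -> path diff1 X (walk_to T X L).
Proof.
elim: L X => //= i L IH X fixL.
rewrite (IH _ (fixable_catr (L := [:: i]) fixL)) andbT.
by apply: diff1_overwrite1; case/andP: fixL => _ /andP[].
Qed.

Lemma uniq_walk_to T X L : fixable X T L -> uniq (X :: walk_to T X L).
Proof.
elim: L X => // i L IH X fixL.
rewrite cons_uniq (IH _ (fixable_catr (L := [:: i]) fixL)) andbT.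
have /andP[_ /andP[neq _]] := fixL.
apply: contraL neq => /(@mem_walk_to T X (i :: L))[[|l] // _ ->].
by rewrite tnth_overwrite mem_head eqxx.
Qed.

Definition set_tnth X i c : n.-tuple 'I_3 := overwrite X [:: i] [tuple of nseq n c].

Lemma tnth_set_tnth X i c j : tnth (set_tnth X i c) j = if j == i then c else tnth X j.
Proof. by rewrite tnth_overwrite inE tnth_nseq. Qed.

Lemma diff1_set_tnth X i c : c != tnth X i -> diff1 X (set_tnth X i c).
Proof. by move=> neq; apply: diff1_overwrite1; rewrite tnth_nseq eq_sym. Qed.

Lemma tnth_overwrite_set_tnth X i c S T j :
  tnth (overwrite (set_tnth X i c) S T) j =
  if j \in S then tnth T j else if j == i then c else tnth X j.
Proof. by rewrite tnth_overwrite tnth_set_tnth. Qed.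

Lemma set_tnth_inj X i i' c c' :
  c != tnth X i -> set_tnth X i c = set_tnth X i' c' -> (i, c) = (i', c').
Proof.
move=> neq /(congr1 (fun Y => tnth Y i)); rewrite !tnth_set_tnth eqxx.
by case: (eqVneq i i') => [-> -> | _ eq_c] //; rewrite eq_c eqxx in neq.
Qed.

Lemma diff1_exists X : 0 < n -> exists Y, diff1 X Y.
Proof.
move=> n0; exists (set_tnth X (Ordinal n0) (if tnth X (Ordinal n0) == i0 then i1 else i0)).
by apply: diff1_set_tnth; case: (tnth X _) => [[|[|[|]]] ?].
Qed.

Definition others (x y : 'I_3) : seq 'I_3 :=
  [seq c <- [:: i0; i1; i2] | (c != x) && (c != y)].

Lemma mem_others x y c : (c \in others x y) = (c != x) && (c != y).
Proof.
rewrite mem_filter; have -> : c \in [:: i0; i1; i2] by case: c => [[|[|[|c]]] ?].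
by rewrite andbT.
Qed.

Lemma size_others x y : size (others x y) = 2 - (x != y).
Proof. by case: x => [[|[|[|x]]] ?]; case: y => [[|[|[|y]]] ?]. Qed.

Definition avoiding X X' : seq ('I_n * 'I_3) :=
  [seq (i, c) | i <- enum 'I_n, c <- others (tnth X i) (tnth X' i)].

Lemma mem_avoiding X X' i c :
  (i, c) \in avoiding X X' -> (c != tnth X i) && (c != tnth X' i).
Proof. by case/allpairsPdep => j [d [_ + [-> ->]]]; rewrite mem_others. Qed.

Lemma uniq_avoiding X X' : uniq (avoiding X X').
Proof.
apply: allpairs_uniq_dep => [|i _|]; rewrite ?enum_uniq ?filter_uniq //.
by move=> [i c] [j d] _ _ [/= -> ->].
Qed.

Lemma size_avoiding X X' : size (avoiding X X') + size (diffpos X X') = 2 * n.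
Proof.
rewrite size_allpairs_dep size_filter -[in RHS](size_enum_ord n).
elim: (enum 'I_n) => //= i e IH; rewrite size_others; case: (_ != _) => /=; lia.
Qed.

End Strings.

Definition container {r s t} (u v : vert r s t) (k l : nat) : Prop :=
  exists ps : seq (seq (vert r s t)),
    [/\ size ps = k, (forall p, p \in ps -> is_uv_path u v p), int_disjoint ps
      & forall p, p \in ps -> size p <= l].

Section Graph.
Variables r s t : nat.
Local Notation V := (vert r s t).
Implicit Types (X : r.-tuple 'I_3) (Y : s.-tuple 'I_3) (Z : t.-tuple 'I_3) (u v : V).

Lemma interior_uv u v p x : is_uv_path u v p -> x \in interior p -> x \in p /\ x != v.
Proof.
case/and3P=> _ /eqP <-; case/lastP: p => // p y.
rewrite /interior size_rcons /= -cats1 take_size_cat // cats1 last_rcons /=.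
rewrite rcons_uniq => /andP[_ /andP[yNp _]] xp; rewrite mem_rcons inE xp orbT.
by split=> //; apply: contraNneq yNp => <-.
Qed.

Definition share_only v (p q : seq V) := all (fun x => (x \in q) ==> (x == v)) p.

Lemma share_onlyP v p q :
  reflect (forall x, x \in p -> x \in q -> x = v) (share_only v p q).
Proof.
apply: (iffP allP) => [H x xp xq | H x xp]; first by apply/eqP; rewrite (implyP (H x xp)).
by apply/implyP => /(H x xp)->.
Qed.

Lemma container_of_pairwise u v l ps :
  (forall p, p \in ps -> is_uv_path u v p /\ size p <= l) ->
  pairwise (share_only v) ps -> container u v (size ps) l.
Proof.
move=> uv shared; exists ps; split=> // [p /uv[] // | | p /uv[] //].
apply/int_disjointP; apply: (sub_in_pairwise _ (allss ps)) shared => p q ps_p ps_q.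
case: (uv p ps_p) (uv q ps_q) => uv_p _ [uv_q _] /share_onlyP meet.
rewrite disjoint_has; apply/hasPn => x /(interior_uv uv_p)[xp xNv].
by apply: contra xNv => /(interior_uv uv_q)[xq _]; rewrite (meet x xp xq).
Qed.

Lemma container_take u v k k' l : k' <= k -> container u v k l -> container u v k' l.
Proof.
move=> k'k [ps [size_ps uv /int_disjointP disj len]]; exists (take k' ps); split.
- by rewrite size_takel ?size_ps.
- by move=> p /mem_take; apply: uv.
- exact/int_disjointP/(subseq_pairwise (take_subseq _ _)).
by move=> p /mem_take; apply: len.
Qed.

Definition layer2 Y Z X : V := (X, Y, Z, i2).
Definition layer1 X Z Y : V := (X, Y, Z, i1).

Lemma adj_layers X Y Z (d d' : 'I_3) : d != d' -> e3c_adj ((X, Y, Z, d) : V) (X, Y, Z, d').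
Proof. by move=> neq; rewrite /e3c_adj /vA /vB /vC /vd /= !eqxx neq. Qed.

Lemma adj_layer2 Y Z : {homo layer2 Y Z : X X' / diff1 X X' >-> e3c_adj X X'}.
Proof. by move=> X X' h; rewrite /e3c_adj /vA /vB /vC /vd /= !eqxx h !orbT. Qed.

Lemma adj_layer1 X Z : {homo layer1 X Z : Y Y' / diff1 Y Y' >-> e3c_adj Y Y'}.
Proof. by move=> Y Y' h; rewrite /e3c_adj /vA /vB /vC /vd /= !eqxx h !orbT. Qed.

Lemma adj_layer0 X Y Z Z' : diff1 Z Z' -> e3c_adj ((X, Y, Z, i0) : V) (X, Y, Z', i0).
Proof. by move=> h; rewrite /e3c_adj /vA /vB /vC /vd /= !eqxx h !orbT. Qed.

Lemma layer2_inj Y Z : injective (layer2 Y Z).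
Proof. by move=> X X' []. Qed.

Lemma layer1_inj X Z : injective (layer1 X Z).
Proof. by move=> Y Y' []. Qed.

Section Paths.
Variables (A A' : r.-tuple 'I_3) (B B' : s.-tuple 'I_3).
Hypotheses (neqA : A != A') (neqB : B != B').
Local Notation D := (diffpos A A').
Local Notation E := (diffpos B B').

Lemma fixableD : fixable A A' D. Proof. exact: fixable_diffpos. Qed.
Lemma fixableE : fixable B B' E. Proof. exact: fixable_diffpos. Qed.

Definition cross Z : seq V :=
  map (layer2 B Z) (walk_to A' A D) ++ map (layer1 A' Z) (B :: walk_to B' B E).

Lemma path_cross Z : path e3c_adj (A, B, Z, i2) (cross Z).
Proof.
rewrite cat_path (homo_path (@adj_layer2 B Z) (path_walk_to fixableD)).
rewrite last_map last_walk_to overwrite_diffpos //= adj_layers //=.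
exact: homo_path (@adj_layer1 A' Z) (path_walk_to fixableE).
Qed.

Lemma last_cross Z x : last x (cross Z) = (A', B', Z, i1).
Proof. by rewrite last_cat /= last_map last_walk_to overwrite_diffpos. Qed.

Lemma mem_cross Z x : x \in (A, B, Z, i2) :: cross Z ->
  (exists X, x = (X, B, Z, i2)) \/ (exists Y, x = (A', Y, Z, i1)).
Proof.
rewrite -[_ :: _]/(map (layer2 B Z) (A :: _) ++ _) mem_cat.
by case/orP=> /mapP[y _ ->]; [left | right]; exists y.
Qed.

Lemma uniq_cross Z : uniq ((A, B, Z, i2) :: cross Z).
Proof.
apply: (@uniq_cat_key _ _ vd (map (layer2 B Z) (A :: _))).
- by rewrite (map_inj_uniq (@layer2_inj _ _)) uniq_walk_to ?fixableD.
- by rewrite (map_inj_uniq (@layer1_inj _ _)) uniq_walk_to ?fixableE.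
by move=> x y /mapP[? _ ->] /mapP[? _ ->].
Qed.

Lemma size_cross Z : size (cross Z) = size D + size E + 1.
Proof. by rewrite size_cat /= !size_map !size_walk_to addnS addn1. Qed.

Definition detour Z : seq V :=
  (A, B, Z, i0) :: (A, B, Z, i2) :: cross Z ++ [:: (A', B', Z, i0)].

Lemma path_detour x Z p : e3c_adj x (A, B, Z, i0) -> path e3c_adj (A', B', Z, i0) p ->
  path e3c_adj x (detour Z ++ p).
Proof.
move=> adj_x path_p; rewrite /= adj_x adj_layers //= -catA cat_path path_cross last_cross /=.
by rewrite adj_layers.
Qed.

Lemma mem_detour Z x : x \in detour Z -> vC x = Z.
Proof.
rewrite /detour -cat_cons in_cons mem_cat mem_seq1.
by case/or3P=> [/eqP-> // | /mem_cross[[? ->] | [? ->]] // | /eqP->].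
Qed.

Lemma uniq_detour Z : uniq (detour Z).
Proof.
rewrite /detour -cat_cons cons_uniq mem_cat mem_seq1 negb_or -andbA; apply/and3P; split.
- by apply/negP => /mem_cross[[? []] | [? []]].
- by apply/eqP => -[/eqP]; rewrite (negbTE neqA).
apply: (@uniq_cat_key _ _ vd); rewrite ?uniq_cross //.
by move=> x y /mem_cross[[? ->] | [? ->]]; rewrite mem_seq1 => /eqP->.
Qed.

Lemma size_detour Z : size (detour Z) = size D + size E + 4.
Proof. by rewrite /= size_cat size_cross /=; lia. Qed.

Variable C : t.-tuple 'I_3.

Definition bridge X L : seq V :=
  map (layer1 X C) (B :: walk_to B' B E) ++ map (layer2 B' C) (X :: walk_to A' X L).

Lemma path_bridge x X L : e3c_adj x (X, B, C, i1) -> fixable X A' L ->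
  path e3c_adj x (bridge X L).
Proof.
move=> adj_x fixL; rewrite /= adj_x cat_path.
rewrite (homo_path (@adj_layer1 X C) (path_walk_to fixableE)) /=.
rewrite last_map last_walk_to overwrite_diffpos // adj_layers //=.
exact: homo_path (@adj_layer2 B' C) (path_walk_to fixL).
Qed.

Lemma last_bridge x X L : last x (bridge X L) = (overwrite X L A', B', C, i2).
Proof. by rewrite last_cat /= last_map last_walk_to. Qed.

Lemma uniq_bridge X L : fixable X A' L -> uniq (bridge X L).
Proof.
move=> fixL; apply: (@uniq_cat_key _ _ vd).
- by rewrite (map_inj_uniq (@layer1_inj _ _)) uniq_walk_to ?fixableE.
- by rewrite (map_inj_uniq (@layer2_inj _ _)) uniq_walk_to.
by move=> x y /mapP[? _ ->] /mapP[? _ ->].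
Qed.

Lemma mem_bridge X L x : x \in bridge X L ->
  (exists Y, x = (X, Y, C, i1)) \/
  exists2 l, l <= size L & x = (overwrite X (take l L) A', B', C, i2).
Proof.
rewrite mem_cat => /orP[/mapP[Y _ ->] | /mapP[X' /mem_walk_to_cons[l lL ->] ->]].
  by left; exists Y.
by right; exists l.
Qed.

Lemma size_bridge X L : size (bridge X L) = size E + size L + 2.
Proof. by rewrite size_cat /= !size_map !size_walk_to; lia. Qed.

Definition zigzag T L L' : seq V :=
  map (layer2 B C) (walk_to T A L) ++ bridge (overwrite A L T) L'.

Section Zigzag.
Variables (T : r.-tuple 'I_3) (L L' : seq 'I_r).
Local Notation X := (overwrite A L T).
Hypotheses (fixL : fixable A T L) (fixL' : fixable X A' L').

Lemma path_zigzag : path e3c_adj (A, B, C, i2) (zigzag T L L').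
Proof.
rewrite cat_path (homo_path (@adj_layer2 B C) (path_walk_to fixL)).
by rewrite last_map last_walk_to path_bridge ?adj_layers.
Qed.

Lemma uniq_zigzag : uniq ((A, B, C, i2) :: zigzag T L L').
Proof.
apply: (@uniq_cat_key _ _ (fun x => (vd x, vB x)) (map (layer2 B C) (A :: _))).
- by rewrite (map_inj_uniq (@layer2_inj _ _)) uniq_walk_to.
- exact: uniq_bridge.
by move=> x y /mapP[? _ ->] /mem_bridge[[? ->] | [l _ ->]].
Qed.

End Zigzag.

Lemma last_zigzag x T L L' :
  last x (zigzag T L L') = (overwrite (overwrite A L T) L' A', B', C, i2).
Proof. by rewrite last_cat last_bridge. Qed.

Lemma mem_zigzag T L L' x : x \in zigzag T L L' ->
  [\/ exists2 l, 0 < l <= size L & x = (overwrite A (take l L) T, B, C, i2),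
      exists Y, x = (overwrite A L T, Y, C, i1)
    | exists2 l, l <= size L' & x = (overwrite (overwrite A L T) (take l L') A', B', C, i2)].
Proof.
rewrite mem_cat => /orP[/mapP[X /mem_walk_to[l lL ->] ->] | /mem_bridge[[Y ->] | [l lL ->]]].
- by apply: Or31; exists l.
- by apply: Or32; exists Y.
by apply: Or33; exists l.
Qed.

Lemma size_zigzag T L L' : size (zigzag T L L') = size L + size E + size L' + 2.
Proof. by rewrite size_cat size_map size_walk_to size_bridge; lia. Qed.

Lemma uniqD : uniq D. Proof. by case/andP: fixableD. Qed.

Lemma overwrite_agreeD S i : i \in D -> (tnth (overwrite A S A') i == tnth A' i) = (i \in S).
Proof. by rewrite overwrite_agree mem_diffpos => /negbTE->; rewrite orbF. Qed.

Lemma zigzag_vertex T L L' x : x \in zigzag T L L' -> vC x = C /\ vd x != i0.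
Proof. by case/mem_zigzag=> [[l _ ->] | [Y ->] | [l _ ->]]. Qed.

(** * The case d = 2 *)

Section Layer2.
Variable Ct : t.-tuple 'I_3.
Hypothesis adjCt : diff1 C Ct.
Local Notation u2 := ((A, B, C, i2) : V).
Local Notation v2 := ((A', B', C, i2) : V).
Local Notation a := (size D).

Definition split_path m := zigzag A' (drop m D) (take m D).

Lemma fixable_rot m : fixable A A' (drop m D ++ take m D).
Proof.
have rotD : perm_eq (rot m D) D by rewrite perm_rot.
by rewrite (fixable_perm _ _ rotD) fixableD.
Qed.

Lemma overwrite_rot m : overwrite (overwrite A (drop m D) A') (take m D) A' = A'.
Proof. by rewrite overwrite_cat overwrite_diffpos // => i; rewrite -/(rot m D) mem_rot. Qed.

Lemma split_path_uv m : is_uv_path u2 v2 (split_path m).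
Proof.
have fix1 := fixable_catl (fixable_rot m); have fix2 := fixable_catr (fixable_rot m).
by rewrite /is_uv_path path_zigzag // uniq_zigzag // last_zigzag overwrite_rot eqxx.
Qed.

Lemma size_split_path m : m <= a -> size (split_path m) = a + size E + 2.
Proof. by move=> ma; rewrite size_zigzag size_drop size_takel //; lia. Qed.

Lemma split_path_overwrite m x : x \in split_path m -> exists S, vA x = overwrite A S A'.
Proof.
by case/mem_zigzag=> [[l _ ->] | [Y ->] | [l _ ->]]; [exists (take l (drop m D)) |
  exists (drop m D) | exists (drop m D ++ take l (take m D)); rewrite -overwrite_cat].
Qed.

Lemma split_paths_meet m m' x : m < m' -> m' <= a ->
  x \in split_path m -> x \in split_path m' -> x = v2.
Proof.
move=> mm' m'a /mem_zigzag hx /mem_zigzag hx'.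
(* D_m is corrected on the first two parts of split_path m but not yet on those
   of split_path m'; D_(m'-1) is corrected on the last part of split_path m but
   not on that of split_path m', except at its end v2. *)
have [i iD idx_i] := exists_index uniqD (leq_trans mm' m'a).
have [j jD idx_j] : exists2 j, j \in D & index j D = m'.-1.
  by apply: exists_index uniqD _; case: (m') mm' m'a.
case: hx' => [[l' _] | [Y'] | [l' lm']] e';
  case: hx => [[l /andP[l0 _]] | [Y] | [l lm]] e; rewrite {x}e in e' *;
  move: (congr1 vA e') (congr1 vB e') (congr1 vd e'); rewrite /vA /vB /vd /= => eA eB ed;
  try discriminate ed; try by move: neqB; rewrite eB eqxx.
- have := congr1 (fun X => tnth X i == tnth A' i) eA; rewrite !overwrite_agreeD //.
  rewrite -idx_i drop_index //; case: l l0 {e' eA} => // l _.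
  rewrite /= mem_head => /esym/mem_take.
  by rewrite mem_drop_index ?uniqD // idx_i leqNgt mm'.
- have := congr1 (fun X => tnth X i == tnth A' i) eA.
  by rewrite !overwrite_agreeD // !mem_drop_index ?uniqD // idx_i leqnn leqNgt mm'.
case: (ltnP l' m') => [l'm' | m'l']; last first.
  by rewrite eA take_oversize ?size_takel ?overwrite_rot.
have lm0 : l <= m by move: lm; rewrite size_takel //; lia.
have := congr1 (fun X => tnth X j == tnth A' j) eA.
rewrite !overwrite_cat !overwrite_agreeD // !mem_cat !mem_drop_index ?uniqD //.
rewrite (take_takel _ lm0) (take_takel _ (ltnW l'm')) !in_take // idx_j.
have h1 : m <= m'.-1 by lia.
have h2 : (m' <= m'.-1) = false by apply/negbTE; rewrite -ltnNge; lia.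
have h3 : (m'.-1 < l') = false by apply/negbTE; rewrite -leqNgt; lia.
by rewrite h1 h2 h3.
Qed.

Section Twist.
Variables (p : 'I_r) (c : 'I_3).
Local Notation F := [seq i <- D | i != p].

Definition twist_path := zigzag [tuple of nseq r c] [:: p] (rcons F p).

Lemma overwrite_twist : overwrite (set_tnth A p c) (rcons F p) A' = A'.
Proof.
apply: overwrite_diffpos => i; rewrite mem_diffpos mem_rcons in_cons mem_filter tnth_set_tnth.
by case: (eqVneq i p) => //= _; rewrite mem_diffpos.
Qed.

Lemma twist_path_vertex x : x \in twist_path ->
  x = v2 \/ exists2 S, p \notin S & vA x = overwrite (set_tnth A p c) S A'.
Proof.
case/mem_zigzag=> [[[|[|l]] // _ ->] | [Y ->] | [l _ ->]];
  try by right; exists [::]; rewrite ?overwrite0.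
have pNF : p \notin F by rewrite mem_filter eqxx.
case: (ltnP l (size (rcons F p))) => [lt | ge]; last first.
  by left; rewrite take_oversize // overwrite_twist.
right; exists (take l (rcons F p)) => //.
rewrite -cats1 takel_cat; last by rewrite size_rcons ltnS in lt.
by apply: contra pNF; apply: mem_take.
Qed.

Lemma size_twist_path : size twist_path <= a + size E + 4.
Proof.
rewrite size_zigzag size_rcons; have := count_size (fun i => i != p) D.
by rewrite -size_filter /=; lia.
Qed.

Hypotheses (cA : c != tnth A p) (cA' : c != tnth A' p).

Lemma twist_path_uv : is_uv_path u2 v2 twist_path.
Proof.
have fix1 : fixable A [tuple of nseq r c] [:: p] by rewrite /fixable /= tnth_nseq eq_sym cA.
have fix2 : fixable (set_tnth A p c) A' (rcons F p).
  rewrite /fixable rcons_uniq mem_filter eqxx filter_uniq ?uniqD //.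
  rewrite all_rcons tnth_set_tnth eqxx cA' /=.
  by apply/allP => i; rewrite mem_filter tnth_set_tnth => /andP[/negbTE-> ]; rewrite mem_diffpos.
by rewrite /is_uv_path path_zigzag // uniq_zigzag // last_zigzag overwrite_twist eqxx.
Qed.

Lemma split_twist_meet m x : x \in split_path m -> x \in twist_path -> x = v2.
Proof.
move=> /split_path_overwrite[S eS] /twist_path_vertex[// | [S' pS' eS']].
have := congr1 (fun X => tnth X p) (etrans (esym eS) eS').
rewrite tnth_overwrite tnth_overwrite_set_tnth (negbTE pS') eqxx.
by case: (p \in S) => e; [move: cA' | move: cA]; rewrite e eqxx.
Qed.

End Twist.

Lemma twist_paths_meet p c p' c' x : c != tnth A p -> c != tnth A' p -> (p, c) != (p', c') ->
  x \in twist_path p c -> x \in twist_path p' c' -> x = v2.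
Proof.
move=> cA cA' neq /twist_path_vertex[// | [S pS eS]] /twist_path_vertex[// | [S' pS' eS']].
have := congr1 (fun X => tnth X p) (etrans (esym eS) eS').
rewrite !tnth_overwrite_set_tnth (negbTE pS) eqxx.
case: (eqVneq p p') neq pS' => [<- neq pS' | _ _ _].
  by rewrite (negbTE pS') => ceq; rewrite ceq eqxx in neq.
by case: (p \in S') => e; [move: cA' | move: cA]; rewrite e eqxx.
Qed.

Definition detour_path := (A, B, C, i0) :: detour Ct ++ [:: (A', B', C, i0); v2].

Lemma detour_path_uv : is_uv_path u2 v2 detour_path.
Proof.
have CtC : (C == Ct) = false by apply/negbTE; rewrite diff1_neq.
apply/and3P; split.
- apply/andP; split; first exact: adj_layers.
  by apply: path_detour; rewrite ?adj_layer0 //= adj_layer0 1?diff1_sym // adj_layers.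
- by rewrite /= !last_cat.
rewrite -[_ :: _]/([:: u2; (A, B, C, i0)] ++ detour Ct ++ [:: (A', B', C, i0); v2]).
apply: (@uniq_cat_key _ _ (fun x => (vA x, vC x))) => [| | x y].
- by rewrite /= inE andbT (neq_by vd).
- apply: (@uniq_cat_key _ _ vC) => [| | x y]; rewrite ?uniq_detour //.
    by rewrite /= inE andbT (neq_by vd).
  by move/mem_detour->; rewrite !inE => /orP[] /eqP->; rewrite /vC /= eq_sym CtC.
move=> hx; rewrite mem_cat => /orP[/mem_detour-> | hy].
  by move: hx; rewrite !inE => /orP[]/eqP->; rewrite xpair_eqE CtC andbF.
by move: hx hy; rewrite !inE => /orP[]/eqP-> /orP[]/eqP->; rewrite xpair_eqE (negbTE neqA).
Qed.

Lemma size_detour_path : size detour_path = a + size E + 7.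
Proof. by rewrite -[detour_path]/([:: _] ++ detour Ct ++ _) !size_cat size_detour /=; lia. Qed.

Lemma zigzag_detour_meet T L L' x : x \in zigzag T L L' -> x \in detour_path -> x = v2.
Proof.
case/zigzag_vertex=> xC xd; rewrite /detour_path in_cons mem_cat.
case/or3P=> [/eqP xw | /mem_detour | ]; first by rewrite xw in xd.
  by rewrite xC => CCt; move: adjCt; rewrite -CCt => /diff1_neq; rewrite eqxx.
by rewrite !inE => /orP[] /eqP // xw; rewrite xw in xd.
Qed.

Definition layer2_family :=
  [seq split_path m | m <- iota 0 a.+1] ++
  [seq twist_path ic.1 ic.2 | ic <- avoiding A A'] ++ [:: detour_path].

Lemma size_layer2_family : size layer2_family = 2 * r + 2.
Proof. by rewrite !size_cat !size_map size_iota /=; have := size_avoiding A A'; lia. Qed.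

Lemma layer2_family_uv p : p \in layer2_family -> is_uv_path u2 v2 p /\ size p <= r + s + 7.
Proof.
have bound : a + size E <= r + s by apply: leq_add; apply: size_diffpos.
rewrite !mem_cat => /or3P[/mapP[m] | /mapP[[q c]] | ].
- rewrite mem_iota => /andP[_ ma] ->; rewrite split_path_uv size_split_path //; lia.
- move=> /mem_avoiding /andP[cA cA'] ->; split; first exact: twist_path_uv.
  by apply: leq_trans (size_twist_path q c) _; lia.
rewrite mem_seq1 => /eqP->; split; first exact: detour_path_uv.
by rewrite size_detour_path; lia.
Qed.

Lemma pairwise_layer2_family : pairwise (share_only v2) layer2_family.
Proof.
rewrite !pairwise_cat; apply/and3P; split; last (apply/and3P; split=> //).
- apply/allrelP => p q /mapP[m _ ->]; rewrite mem_cat => /orP[/mapP[[q' c] qc ->] | ].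
    by case/andP: (mem_avoiding qc) => cA cA'; apply/share_onlyP => x; apply: split_twist_meet.
  by rewrite mem_seq1 => /eqP->; apply/share_onlyP => x; apply: zigzag_detour_meet.
- apply: pairwise_map_uniq (iota_uniq _ _) _ => m m'; rewrite !mem_iota /= => ma m'a mm'.
  apply/share_onlyP => x; case: (ltngtP m m') mm' => // [lt | gt] _ xm xm'.
    by apply: (split_paths_meet lt).
  by apply: (split_paths_meet gt).
- apply/allrelP => p q /mapP[ic _ ->]; rewrite mem_seq1 => /eqP->.
  by apply/share_onlyP => x; apply: zigzag_detour_meet.
apply: pairwise_map_uniq (uniq_avoiding A A') _ => -[p c] [p' c'] pc _ neq.
by case/andP: (mem_avoiding pc) => cA cA'; apply/share_onlyP => x; apply: twist_paths_meet.
Qed.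

Lemma container_layer2 : container u2 v2 (2 * r + 2) (r + s + 7).
Proof.
rewrite -size_layer2_family.
exact: container_of_pairwise layer2_family_uv pairwise_layer2_family.
Qed.

End Layer2.

(** * The case d = 0 *)

Section Layer0.
Local Notation u0 := ((A, B, C, i0) : V).
Local Notation v0 := ((A', B', C, i0) : V).

Definition bridge_path := bridge A D ++ [:: v0].
Definition cross_path := (A, B, C, i2) :: cross C ++ [:: v0].
Definition side_path Z := detour Z ++ [:: v0].

Lemma bridge_path_vertex x : x \in bridge_path ->
  [\/ x = v0, exists Y, x = (A, Y, C, i1) | exists X, x = (X, B', C, i2)].
Proof.
rewrite mem_cat mem_seq1 => /orP[/mem_bridge[[Y ->] | [l _ ->]] | /eqP->].
- by apply: Or32; exists Y.
- by apply: Or33; eexists.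
exact: Or31.
Qed.

Lemma cross_path_vertex x : x \in cross_path ->
  [\/ x = v0, exists X, x = (X, B, C, i2) | exists Y, x = (A', Y, C, i1)].
Proof.
rewrite /cross_path -cat_cons mem_cat mem_seq1.
case/orP=> [/mem_cross[[X ->] | [Y ->]] | /eqP->].
- by apply: Or32; exists X.
- by apply: Or33; exists Y.
exact: Or31.
Qed.

Lemma side_path_vertex Z x : x \in side_path Z -> x = v0 \/ vC x = Z.
Proof. by rewrite mem_cat mem_seq1 => /orP[/mem_detour | /eqP]; [right | left]. Qed.

Lemma bridge_path_uv : is_uv_path u0 v0 bridge_path.
Proof.
apply/and3P; split.
- rewrite cat_path path_bridge ?adj_layers ?fixableD // last_bridge /=.
  by rewrite overwrite_diffpos // adj_layers.
- by rewrite last_cat.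
rewrite cons_uniq; apply/andP; split.
  apply/negP => /bridge_path_vertex[e | [? e] | [? e]]; move/eqP: e; apply/negP;
    [exact: (neq_by vA) | exact: (neq_by vd) ..].
apply: (@uniq_cat_key _ _ vd) => [| | x y]; rewrite ?uniq_bridge ?fixableD //.
by case/mem_bridge=> [[? ->] | [? _ ->]]; rewrite mem_seq1 => /eqP->.
Qed.

Lemma cross_path_uv : is_uv_path u0 v0 cross_path.
Proof.
apply/and3P; split.
- rewrite /cross_path -cat_cons cat_path /= adj_layers // path_cross last_cross /=.
  by rewrite adj_layers.
- by rewrite /= last_cat.
rewrite cons_uniq; apply/andP; split.
  apply/negP => /cross_path_vertex[e | [? e] | [? e]]; move/eqP: e; apply/negP;
    [exact: (neq_by vA) | exact: (neq_by vd) ..].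
rewrite /cross_path -cat_cons; apply: (@uniq_cat_key _ _ vd) => [| | x y]; rewrite ?uniq_cross //.
by case/mem_cross=> [[? ->] | [? ->]]; rewrite mem_seq1 => /eqP->.
Qed.

Lemma side_path_uv Z : diff1 C Z -> is_uv_path u0 v0 (side_path Z).
Proof.
move=> adjZ; have ZC : (vC u0 == Z) = false by apply/negbTE; rewrite diff1_neq.
apply/and3P; split.
- by rewrite path_detour ?adj_layer0 //= adj_layer0 // diff1_sym.
- by rewrite last_cat.
rewrite cons_uniq; apply/andP; split.
  apply/negP => /side_path_vertex[/(congr1 vA)/eqP | eZ]; first by rewrite /= (negbTE neqA).
  by rewrite -eZ eqxx in ZC.
apply: (@uniq_cat_key _ _ vC) => [| | x y]; rewrite ?uniq_detour //.
by move/mem_detour->; rewrite mem_seq1 => /eqP->; rewrite eq_sym ZC.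
Qed.

Lemma size_bridge_path : size bridge_path = size D + size E + 3.
Proof. by rewrite size_cat size_bridge /=; lia. Qed.

Lemma size_cross_path : size cross_path = size D + size E + 3.
Proof. by rewrite /= size_cat size_cross /=; lia. Qed.

Lemma size_side_path Z : size (side_path Z) = size D + size E + 5.
Proof. by rewrite size_cat size_detour /=; lia. Qed.

Lemma bridge_cross_meet x : x \in bridge_path -> x \in cross_path -> x = v0.
Proof.
case/bridge_path_vertex=> [// | [Y ->] | [X ->]] /cross_path_vertex[] //.
- by case=> ? /(congr1 vd).
- by case=> ? /(congr1 vA)/eqP; rewrite /= (negbTE neqA).
- by case=> ? /(congr1 vB)/eqP; rewrite /= eq_sym (negbTE neqB).
by case=> ? /(congr1 vd).
Qed.

Lemma side_paths_meet Z Z' x : Z != Z' ->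
  x \in side_path Z -> x \in side_path Z' -> x = v0.
Proof.
move=> ZZ' /side_path_vertex[// | eZ] /side_path_vertex[// | eZ'].
by move: ZZ'; rewrite -eZ -eZ' eqxx.
Qed.

Lemma side_meet Z x : Z != C ->
  x \in bridge_path ++ cross_path -> x \in side_path Z -> x = v0.
Proof.
move=> ZC; rewrite mem_cat => hx /side_path_vertex[// | eZ]; move: ZC; rewrite -eZ.
by case/orP: hx => [/bridge_path_vertex[] | /cross_path_vertex[]] => [-> | [? ->] | [? ->]
  | -> | [? ->] | [? ->]]; rewrite ?eqxx.
Qed.

Definition neighbours := [seq set_tnth C ic.1 ic.2 | ic <- avoiding C C].

Lemma mem_neighbours Z : Z \in neighbours -> diff1 C Z.
Proof. by case/mapP=> -[q c] /mem_avoiding /andP[cC _] ->; apply: diff1_set_tnth. Qed.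

Lemma uniq_neighbours : uniq neighbours.
Proof.
rewrite map_inj_in_uniq ?uniq_avoiding // => -[q c] [q' c'] /mem_avoiding /andP[cC _] _.
exact: set_tnth_inj.
Qed.

Definition layer0_family := [:: bridge_path; cross_path] ++ [seq side_path Z | Z <- neighbours].

Lemma size_layer0_family : size layer0_family = 2 * t + 2.
Proof.
rewrite size_cat size_map /= size_map; have := size_avoiding C C.
by rewrite diffpos_id /=; lia.
Qed.

Lemma layer0_family_uv p : p \in layer0_family -> is_uv_path u0 v0 p /\ size p <= r + s + 5.
Proof.
have bound : size D + size E <= r + s by apply: leq_add; apply: size_diffpos.
rewrite mem_cat !inE -orbA => /or3P[/eqP-> | /eqP-> | /mapP[Z /mem_neighbours adjZ ->]].
- by rewrite bridge_path_uv size_bridge_path; split=> //; lia.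
- by rewrite cross_path_uv size_cross_path; split=> //; lia.
by rewrite side_path_uv // size_side_path; split=> //; lia.
Qed.

Lemma pairwise_layer0_family : pairwise (share_only v0) layer0_family.
Proof.
rewrite pairwise_cat; apply/and3P; split.
- apply/allrelP => p _ pbc /mapP[Z /mem_neighbours /diff1_neq CZ ->].
  apply/share_onlyP => x xp; apply: side_meet; first by rewrite eq_sym.
  by move: pbc; rewrite mem_cat in_cons mem_seq1 => /orP[]/eqP pE; rewrite -pE xp ?orbT.
- by apply/andP; split=> //; apply/andP; split=> //; apply/share_onlyP; apply: bridge_cross_meet.
apply: pairwise_map_uniq uniq_neighbours _ => Z Z' _ _ ZZ'.
by apply/share_onlyP => x; apply: side_paths_meet.
Qed.

Lemma container_layer0 : container u0 v0 (2 * t + 2) (r + s + 5).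
Proof.
rewrite -size_layer0_family.
exact: container_of_pairwise layer0_family_uv pairwise_layer0_family.
Qed.

End Layer0.

End Paths.
End Graph.

(** * The case d = 1, by symmetry *)

Definition swap_layer (d : 'I_3) : 'I_3 := if d == i1 then i2 else if d == i2 then i1 else d.

Definition swap_ab {r s t} (x : vert r s t) : vert s r t :=
  (vB x, vA x, vC x, swap_layer (vd x)).

Section Swap.
Variables r s t : nat.

Lemma swap_abK : cancel (@swap_ab r s t) (@swap_ab s r t).
Proof.
case=> [[[X Y] Z] [[|[|[|d]]] dlt]] //; rewrite /swap_ab /swap_layer /=; congr (_, _).
all: exact: val_inj.
Qed.

Lemma swap_ab_inj : injective (@swap_ab r s t).
Proof. exact: can_inj swap_abK. Qed.

Lemma swap_ab_adj (x y : vert r s t) : e3c_adj (swap_ab x) (swap_ab y) = e3c_adj x y.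
Proof.
case: x y => [[[X Y] Z] [[|[|[|d]]] dlt]] [[[X' Y'] Z'] [[|[|[|d']]] dlt']] //.
all: rewrite /e3c_adj /swap_ab /swap_layer /vA /vB /vC /vd /=.
all: by case: (X == X'); case: (Y == Y'); case: (Z == Z'); rewrite ?andbF ?orbF.
Qed.

Lemma container_swap (u v : vert r s t) k l :
  container u v k l -> container (swap_ab u) (swap_ab v) k l.
Proof.
case=> ps [size_ps uv /int_disjointP disj len]; exists (map (map swap_ab) ps); split.
- by rewrite size_map.
- move=> _ /mapP[p /uv /and3P[path_p /eqP last_p uniq_p] ->]; apply/and3P; split.
  + by rewrite -(eq_path swap_ab_adj) -path_map in path_p.
  + by rewrite last_map last_p.
  by rewrite -map_cons (map_inj_uniq swap_ab_inj).
- apply/int_disjointP; rewrite pairwise_map; apply: sub_pairwise disj => p q /=.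
  rewrite /interior !size_map -!map_take !disjoint_has has_map; apply: contra.
  by case/hasP=> x xp /=; rewrite (mem_map swap_ab_inj) => xq; apply/hasP; exists x.
by move=> _ /mapP[p /len lp ->]; rewrite size_map.
Qed.

End Swap.

Theorem lemma12 (r s t : nat) (u v : vert r s t) :
  1 <= r -> r <= s -> s <= t ->
  vA u != vA v -> vB u != vB v -> vC u = vC v -> vd u = vd v ->
  exists ps : seq (seq (vert r s t)),
    [/\ size ps = 2 * r + 2,
        (forall p, p \in ps -> is_uv_path u v p),
        int_disjoint ps
      & forall p, p \in ps ->
          size p <= (if vd u == i0 then r + s + 5 else r + s + 7)].
Proof.
case: u v => [[[A B] C] d] [[[A' B'] C'] d'].
rewrite /vA /vB /vC /vd /= => r1 rs st neqA neqB <- <-.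
have [Ct adjCt] : exists Ct, diff1 C Ct by apply: diff1_exists; lia.
case: d => [[|[|[|d]]] dlt] //.
- rewrite (_ : Ordinal dlt = i0) //; last exact: val_inj.
  by apply: container_take (container_layer0 neqA neqB C); lia.
- rewrite (_ : Ordinal dlt = i1) //; last exact: val_inj.
  have := container_swap (container_layer2 neqB neqA adjCt); rewrite [s + r]addnC.
  by apply: container_take; lia.
rewrite (_ : Ordinal dlt = i2) //=; last exact: val_inj.
exact: (container_layer2 neqA neqB adjCt).
Qed.
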